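(* Let $n\ge 0$ be an integer and for $k\in\mathbb{Z}_+$ let $$v_k(t)=c_k\,e^{-\frac{t^{2n+2}}{2n+2}}L^{(-\frac{1}{2n+2})}_{k}\!\left(\frac{t^{2n+2}}{n+1}\right),\qquad w_k(t)=d_k\,e^{-\frac{t^{2n+2}}{2n+2}}\,t\,L^{(\frac{1}{2n+2})}_{k}\!\left(\frac{t^{2n+2}}{n+1}\right),$$ with $c_k,d_k>0$ chosen so that $\|t^nv_k\|_{L^2(\mathbb{R})}=\|t^nw_k\|_{L^2(\mathbb{R})}=1$, and let $E_k=4k(n+1)+2n+1$. There exists a constant $C_0>0$ such that for all $k\in\mathbb{Z}_+$ $$\|v_k\|_{L^\infty(\mathbb{R})}\le C_0E_k^{\frac32+\frac{1}{4n+4}},\qquad \|w_k\|_{L^\infty(\mathbb{R})}\le C_0E_k^{\frac32+\frac{1}{4n+4}}.$$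
   Context: $L^{(a)}_k$ denotes the generalized Laguerre polynomial of degree $k$ and parameter $a$. These functions solve $-u''+t^{2(2n+1)}u=E\,t^{2n}u$, with $E=E_k$ for $v_k$ and $E=4k(n+1)+2n+3$ for $w_k$. *)

From Stdlib Require Import Reals.
From Coquelicot Require Import Coquelicot.
Open Scope R_scope.

Fixpoint gbinom (x : R) (m : nat) : R :=
  match m with
  | O => 1
  | S m' => gbinom x m' * (x - INR m') / INR (S m')
  end.

Definition laguerre (k : nat) (a x : R) : R :=
  sum_f_R0 (fun i => (-1) ^ i * gbinom (INR k + a) (k - i) * x ^ i / INR (Factorial.fact i)) k.

(* Unnormalized functions (without the constants c_k, d_k). *)
Definition v_unnorm (n k : nat) (t : R) : R :=
  exp (- t ^ (2 * n + 2) / INR (2 * n + 2))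
  * laguerre k (- / INR (2 * n + 2)) (t ^ (2 * n + 2) / INR (n + 1)).

Definition w_unnorm (n k : nat) (t : R) : R :=
  exp (- t ^ (2 * n + 2) / INR (2 * n + 2)) * t
  * laguerre k (/ INR (2 * n + 2)) (t ^ (2 * n + 2) / INR (n + 1)).

Definition Ek (n k : nat) : R := INR (4 * k * (n + 1) + 2 * n + 1).

Definition L2_normalized (f : R -> R) : Prop :=
  is_RInt_gen (fun t => (f t) ^ 2) (Rbar_locally m_infty) (Rbar_locally p_infty) 1.

(* Both u = c_k v_k and u = d_k w_k solve -u'' + t^{2(2n+1)} u = E t^{2n} u, with E = E_k resp.
   E_k + 2 (the Laguerre equation after the substitution x = t^{2n+2}/(n+1)); moreover u^2 is
   even, t u(t) is bounded and int t^{2n} u^2 = 1.  Hence |u| attains its maximum at some T >= 0,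
   where u'(T) = 0 and, by the second derivative test, T^{2n+2} <= E.  For rho >= T with
   rho^{2n+2} <= E, the equation gives |u''| <= 4^{2n+1} rho^{2n} E |u(T)| on [T, 2 rho], so by
   Taylor's formula |u| >= |u(T)|/2 on [T, T + delta] once 4^{2n+1} rho^{2n} E delta^2 <= 1/2,
   and the normalisation yields delta (T + delta/2)^{2n} u(T)^2 <= 8.  Taking
   rho = delta ~ E^{-1/(2n+2)} when T is that small, and rho = T, delta ~ T/E otherwise, gives
   |u| <= 2^{3n+5} E, which is stronger than the claimed bound. *)

From Stdlib Require Import Reals Lra Lia.
From Coquelicot Require Import Coquelicot.
Open Scope R_scope.

(** * Calculus on the real line *)

Lemma RInt_le_is_RInt_gen (F : R -> R) (l u v : R) :
  (forall x, continuous F x) -> (forall x, 0 <= F x) -> u <= v ->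
  is_RInt_gen F (Rbar_locally m_infty) (Rbar_locally p_infty) l ->
  RInt F u v <= l.
Proof.
  intros F_cont F_ge0 uv HF.
  assert (ex_F : forall a b, ex_RInt F a b)
    by (intros a b; apply (ex_RInt_continuous (V := R_CompleteNormedModule)); auto).
  destruct (Rle_or_lt (RInt F u v) l) as [|gt_l]; [assumption | exfalso].
  set (eps := mkposreal _ (proj2 (Rlt_0_minus _ _) gt_l)).
  destruct (HF (ball l eps) (locally_ball l eps)) as [P Q [M1 HP] [M2 HQ] HPQ].
  pose proof (Rmin_l (M1 - 1) u); pose proof (Rmax_l (M2 + 1) v).
  pose proof (Rmin_r (M1 - 1) u) as au; pose proof (Rmax_r (M2 + 1) v) as vb.
  set (a := Rmin (M1 - 1) u) in *; set (b := Rmax (M2 + 1) v) in *.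
  destruct (HPQ a b) as [I [HI close]]; [apply HP; lra | apply HQ; lra |].
  apply (is_RInt_unique (V := R_CompleteNormedModule)) in HI; simpl in HI.
  assert (split3 : RInt F a b = RInt F a u + RInt F u v + RInt F v b).
  { rewrite <- (RInt_Chasles F a u b), <- (RInt_Chasles F u v b) by auto.
    unfold plus; simpl; ring. }
  assert (0 <= RInt F a u) by (apply RInt_ge_0; auto).
  assert (0 <= RInt F v b) by (apply RInt_ge_0; auto).
  unfold ball in close; simpl in close.
  unfold AbsRing_ball, abs, minus, plus, opp in close; simpl in close.
  apply Rabs_lt_between in close; lra.
Qed.

Lemma RInt_ge_const (F : R -> R) (u v m : R) :
  u <= v -> (forall x, continuous F x) -> (forall x, u <= x <= v -> m <= F x) ->
  (v - u) * m <= RInt F u v.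
Proof.
  intros uv F_cont F_ge.
  assert (H : RInt (fun _ => m) u v <= RInt F u v).
  { apply RInt_le; auto.
    - apply ex_RInt_const.
    - apply (ex_RInt_continuous (V := R_CompleteNormedModule)); auto.
    - intros x Hx; apply F_ge; lra. }
  rewrite RInt_const in H; exact H.
Qed.

Lemma deriv_eq0_at_max (g g' : R -> R) (T : R) :
  (forall x, derivable_pt_lim g x (g' x)) -> (forall x, g x <= g T) -> g' T = 0.
Proof.
  intros Dg Tmax.
  assert (pr : derivable_pt g T) by (exists (g' T); apply Dg).
  rewrite <- (derive_pt_eq_0 g T (g' T) pr (Dg T)).
  apply (deriv_maximum g (T - 1) (T + 1)); auto; lra.
Qed.

Lemma second_deriv_le0_at_max (g g' g'' : R -> R) (T : R) :
  (forall x, derivable_pt_lim g x (g' x)) -> (forall x, derivable_pt_lim g' x (g'' x)) ->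
  (forall x, g x <= g T) -> g'' T <= 0.
Proof.
  intros Dg Dg' Tmax.
  pose proof (deriv_eq0_at_max g g' T Dg Tmax) as g'T.
  destruct (Rle_or_lt (g'' T) 0) as [|pos]; [assumption | exfalso].
  destruct (Dg' T (g'' T) pos) as [del Hdel].
  assert (g'_pos : forall h, 0 < h < del -> 0 < g' (T + h)).
  { intros h Hh.
    assert (Rabs h < del) by (rewrite Rabs_right; lra).
    specialize (Hdel h ltac:(lra) ltac:(assumption)).
    rewrite g'T, Rminus_0_r in Hdel.
    apply Rabs_lt_between in Hdel.
    assert (0 < g' (T + h) / h) by lra.
    replace (g' (T + h)) with (g' (T + h) / h * h) by (field; lra).
    apply Rmult_lt_0_compat; lra. }
  pose proof (cond_pos del).
  destruct (MVT_cor2 g g' T (T + del / 2)) as [c [Hc c_in]]; [lra | auto |].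
  specialize (g'_pos (c - T) ltac:(lra)); replace (T + (c - T)) with c in g'_pos by ring.
  specialize (Tmax (T + del / 2)).
  nra.
Qed.

Lemma taylor2_bound (f f' f'' : R -> R) (a b K : R) :
  (forall x, derivable_pt_lim f x (f' x)) -> (forall x, derivable_pt_lim f' x (f'' x)) ->
  f' a = 0 -> a <= b -> (forall r, a <= r <= b -> Rabs (f'' r) <= K) ->
  Rabs (f b - f a) <= K * (b - a) ^ 2.
Proof.
  intros Df Df' f'a ab f''_le.
  destruct (MVT_abs f f' a b) as [c [Hc c_in]]; [intros; auto |].
  destruct (MVT_abs f' f'' a c) as [d [Hd d_in]]; [intros; auto |].
  rewrite Rmin_left, Rmax_right in c_in by lra.
  rewrite Rmin_left, Rmax_right in d_in by lra.
  rewrite f'a, Rminus_0_r in Hd.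
  rewrite (Rabs_right (c - a)) in Hd by lra.
  rewrite (Rabs_right (b - a)) in Hc by lra.
  specialize (f''_le d ltac:(lra)).
  pose proof (Rabs_pos (f'' d)).
  rewrite Hc, Hd; simpl.
  assert (Rabs (f'' d) * (c - a) <= K * (b - a)) by (apply Rmult_le_compat; lra).
  nra.
Qed.

Lemma sqr_attains_max (f : R -> R) (A t : R) :
  (forall x, continuity_pt f x) -> (forall s, 1 <= Rabs s -> Rabs (s * f s) <= A) ->
  f t <> 0 -> exists T, forall s, f s ^ 2 <= f T ^ 2.
Proof.
  intros f_cont decay ft.
  pose proof (Rabs_pos_lt _ ft) as ft_pos.
  set (B := Rmax 1 (Rmax (Rabs t) (A / Rabs (f t)))).
  assert (B1 : 1 <= B) by apply Rmax_l.
  assert (Bt : Rabs t <= B) by (eapply Rle_trans; [apply Rmax_l | apply Rmax_r]).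
  assert (BA : A / Rabs (f t) <= B) by (eapply Rle_trans; [apply Rmax_r | apply Rmax_r]).
  destruct (continuity_ab_maj (fun s => f s ^ 2) (- B) B) as [T [Tmax T_in]]; [lra | |].
  { intros x _; apply continuity_pt_mult; [auto |].
    apply continuity_pt_mult; [auto | apply continuity_pt_const; intros ? ?; auto]. }
  exists T; intros s.
  destruct (Rle_or_lt (Rabs s) B) as [sB | Bs].
  - apply Tmax, Rabs_le_between, sB.
  - assert (small : Rabs (f s) < Rabs (f t)).
    { specialize (decay s ltac:(lra)); rewrite Rabs_mult in decay.
      apply Rmult_lt_reg_l with (Rabs s); [lra |].
      apply Rle_lt_trans with A; [assumption |].
      apply Rle_lt_trans with (B * Rabs (f t)); [| apply Rmult_lt_compat_r; lra].
      unfold Rdiv in BA; apply Rmult_le_reg_r with (/ Rabs (f t));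
        [apply Rinv_0_lt_compat; lra |].
      rewrite Rmult_assoc, Rinv_r, Rmult_1_r; lra. }
    assert (f s ^ 2 < f t ^ 2).
    { rewrite <- (pow2_abs (f s)), <- (pow2_abs (f t)).
      pose proof (Rabs_pos (f s)); simpl; nra. }
    specialize (Tmax t (proj1 (Rabs_le_between _ _) Bt)); simpl in *; lra.
Qed.

Lemma exp_half_mul_pow_le (x : R) (m : nat) :
  0 <= x -> exp (- x / 2) * x ^ m <= 2 ^ m * INR (Factorial.fact m).
Proof.
  intros x_ge0.
  pose proof (INR_fact_lt_0 m) as fact_pos.
  assert (taylor_term : (x / 2) ^ m / INR (Factorial.fact m) <= exp (x / 2)).
  { apply Rle_trans with (sum_f_R0 (fun i => (x / 2) ^ i / INR (Factorial.fact i)) m);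
      [| apply exp_ge_taylor; lra].
    destruct m as [| m]; [simpl; lra |].
    rewrite tech5.
    assert (0 <= sum_f_R0 (fun i => (x / 2) ^ i / INR (Factorial.fact i)) m); [| lra].
    apply cond_pos_sum; intros i.
    apply Rmult_le_pos; [apply pow_le; lra | left; apply Rinv_0_lt_compat, INR_fact_lt_0]. }
  pose proof (pow_lt 2 m ltac:(lra)).
  replace (exp (- x / 2) * x ^ m)
    with (2 ^ m * INR (Factorial.fact m)
          * (exp (- (x / 2)) * ((x / 2) ^ m / INR (Factorial.fact m))))
    by (unfold Rdiv; rewrite Rpow_mult_distr, pow_inv, Ropp_mult_distr_l; field; lra).
  rewrite <- (Rmult_1_r (2 ^ m * INR (Factorial.fact m))) at 2.
  apply Rmult_le_compat_l; [nra |].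
  rewrite <- (exp_0), <- (Rplus_opp_l (x / 2)), exp_plus.
  apply Rmult_le_compat_l; [left; apply exp_pos | assumption].
Qed.

(** * A sup bound for weighted eigenfunctions *)

Lemma pow_double_even (x : R) (m : nat) : (2 * x) ^ (2 * m) = 4 ^ m * x ^ (2 * m).
Proof. rewrite Rpow_mult_distr, (pow_mult 2); replace (2 ^ 2) with 4 by ring; reflexivity. Qed.

Lemma pow_even_ge0 (x : R) (m : nat) : 0 <= x ^ (2 * m).
Proof. rewrite pow_mult; apply pow_le, pow2_ge_0. Qed.

Lemma potential_bound (n : nat) (E rho r : R) :
  0 <= r <= 2 * rho -> rho ^ (2 * n + 2) <= E ->
  Rabs (r ^ (2 * n) * (r ^ (2 * n + 2) - E)) <= 4 ^ (2 * n + 1) * rho ^ (2 * n) * E.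
Proof.
  intros r_in rho_E.
  replace (2 * n + 2)%nat with (2 * (n + 1))%nat in * by lia.
  assert (r_2n : r ^ (2 * n) <= 4 ^ n * rho ^ (2 * n)).
  { rewrite <- pow_double_even; apply pow_incr; lra. }
  assert (r_2n2 : r ^ (2 * (n + 1)) <= 4 ^ (n + 1) * E).
  { apply Rle_trans with (4 ^ (n + 1) * rho ^ (2 * (n + 1))).
    - rewrite <- pow_double_even; apply pow_incr; lra.
    - apply Rmult_le_compat_l; [apply pow_le; lra | assumption]. }
  pose proof (pow_even_ge0 r (n + 1)); pose proof (pow_even_ge0 rho (n + 1)).
  assert (Rabs (r ^ (2 * (n + 1)) - E) <= 4 ^ (n + 1) * E).
  { pose proof (pow_R1_Rle 4 (n + 1) ltac:(lra)). apply Rabs_le; split; nra. }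
  rewrite Rabs_mult, Rabs_right by (apply Rle_ge, pow_even_ge0).
  assert (H4 : 4 ^ (2 * n + 1) = 4 ^ n * 4 ^ (n + 1)) by (rewrite <- pow_add; f_equal; lia).
  replace (4 ^ (2 * n + 1) * rho ^ (2 * n) * E)
    with (4 ^ n * rho ^ (2 * n) * (4 ^ (n + 1) * E)) by (rewrite H4; ring).
  apply Rmult_le_compat; auto using pow_even_ge0, Rabs_pos.
Qed.

Lemma exists_pow_eq_inv (y : R) (m : nat) :
  1 <= y -> (0 < m)%nat -> exists eta, 0 < eta <= 1 /\ eta ^ m = / y.
Proof.
  intros y1 m_pos.
  assert (0 < INR m) by (apply lt_0_INR; assumption).
  exists (Rpower y (- / INR m)); split; [split |].
  - apply exp_pos.
  - rewrite Rpower_Ropp, <- Rinv_1; apply Rinv_le_contravar; [lra |].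
    rewrite <- (Rpower_O y) by lra; apply Rle_Rpower; [assumption |].
    left; apply Rinv_0_lt_compat; assumption.
  - rewrite <- Rpower_pow by apply exp_pos.
    rewrite Rpower_mult.
    replace (- / INR m * INR m) with (- (1)) by (field; lra).
    rewrite Rpower_Ropp, Rpower_1; lra.
Qed.

Lemma INR_2n2 (n : nat) : INR (2 * n + 2) = 2 * (INR n + 1).
Proof. rewrite plus_INR, mult_INR; simpl; ring. Qed.

Lemma pow_2n1 (n : nat) (t : R) : t ^ (2 * n + 1) = t ^ (2 * n) * t.
Proof. rewrite pow_add; simpl; ring. Qed.

Lemma pow_2n2 (n : nat) (t : R) : t ^ (2 * n + 2) = t ^ (2 * n) * t ^ 2.
Proof. apply pow_add. Qed.

Lemma pow_4n2 (n : nat) (x : R) : x ^ (2 * (2 * n + 1)) = x ^ (2 * n) * x ^ (2 * n + 2).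
Proof. rewrite <- pow_add; f_equal; lia. Qed.

Lemma pow_even_abs (t : R) (m : nat) : t ^ (2 * m) = Rabs t ^ (2 * m).
Proof. rewrite !pow_mult, pow2_abs; reflexivity. Qed.

Lemma pow_2n2_opp (n : nat) (s : R) : (- s) ^ (2 * n + 2) = s ^ (2 * n + 2).
Proof.
  replace (2 * n + 2)%nat with (2 * (n + 1))%nat by lia.
  rewrite (pow_even_abs (- s)), (pow_even_abs s), Rabs_Ropp; reflexivity.
Qed.

Lemma pow4_2n1 (n : nat) : 4 ^ (2 * n + 1) = 4 * (4 ^ n) ^ 2.
Proof. rewrite pow_add, <- pow_mult, Nat.mul_comm; simpl; ring. Qed.

Lemma pow4_2n2 (n : nat) : 4 ^ (2 * n + 2) = 16 * (4 ^ n) ^ 2.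
Proof. rewrite pow_add, <- pow_mult, Nat.mul_comm; simpl; ring. Qed.

Lemma pow4_3n5 (n : nat) : 4 ^ (3 * n + 5) = 1024 * (4 ^ n) ^ 3.
Proof. rewrite pow_add, <- pow_mult, Nat.mul_comm; simpl; ring. Qed.

Definition weighted_eigenfunction (n : nat) (E : R) (f : R -> R) : Prop :=
  exists f' f'' : R -> R,
    (forall x, derivable_pt_lim f x (f' x)) /\
    (forall x, derivable_pt_lim f' x (f'' x)) /\
    (forall x, - f'' x + x ^ (2 * (2 * n + 1)) * f x = E * x ^ (2 * n) * f x).

Lemma weighted_eigenfunction_intro (n : nat) (E : R) (f f' : R -> R) :
  (forall x, is_derive f x (f' x)) ->
  (forall x, is_derive f' x (x ^ (2 * n) * (x ^ (2 * n + 2) - E) * f x)) ->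
  weighted_eigenfunction n E f.
Proof.
  intros Df Df'.
  exists f', (fun x => x ^ (2 * n) * (x ^ (2 * n + 2) - E) * f x).
  repeat split; intros x; try apply is_derive_Reals; auto.
  rewrite pow_4n2; ring.
Qed.

Lemma weighted_eigenfunction_scale (n : nat) (E c : R) (f : R -> R) :
  weighted_eigenfunction n E f -> weighted_eigenfunction n E (fun t => c * f t).
Proof.
  intros [f' [f'' [Df [Df' eigen]]]].
  exists (fun x => c * f' x), (fun x => c * f'' x).
  repeat split; intros x.
  - apply (derivable_pt_lim_scal f c x), Df.
  - apply (derivable_pt_lim_scal f' c x), Df'.
  - replace (- (c * f'' x) + x ^ (2 * (2 * n + 1)) * (c * f x))
      with (c * (- f'' x + x ^ (2 * (2 * n + 1)) * f x)) by ring.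
    rewrite eigen; ring.
Qed.

Section SupBound.

Variables (n : nat) (E : R) (f f' f'' : R -> R).
Hypothesis E_ge1 : 1 <= E.
Hypothesis Df : forall x, derivable_pt_lim f x (f' x).
Hypothesis Df' : forall x, derivable_pt_lim f' x (f'' x).
Hypothesis eigen : forall x, - f'' x + x ^ (2 * (2 * n + 1)) * f x = E * x ^ (2 * n) * f x.
Hypothesis mass_le1 : forall u v, u <= v -> RInt (fun s => (s ^ n * f s) ^ 2) u v <= 1.

Lemma f''_eq (x : R) : f'' x = x ^ (2 * n) * (x ^ (2 * n + 2) - E) * f x.
Proof.
  pose proof (eigen x) as eigen_x; rewrite pow_4n2 in eigen_x; lra.
Qed.

Lemma deriv_sqr (x : R) : derivable_pt_lim (fun s => f s ^ 2) x (2 * (f x * f' x)).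
Proof.
  apply is_derive_Reals.
  replace (2 * (f x * f' x)) with (INR 2 * f' x * f x ^ pred 2) by (simpl; ring).
  apply is_derive_pow, is_derive_Reals, Df.
Qed.

Lemma deriv_zero_at_max (T : R) :
  (forall s, f s ^ 2 <= f T ^ 2) -> f T <> 0 -> f' T = 0.
Proof.
  intros Tmax fT.
  pose proof (deriv_eq0_at_max _ _ T deriv_sqr Tmax) as H.
  apply Rmult_integral in H as [H | H]; [lra |].
  apply Rmult_integral in H as [H | H]; [contradiction | assumption].
Qed.

Lemma max_point_in_well (T : R) :
  (forall s, f s ^ 2 <= f T ^ 2) -> f T <> 0 -> T ^ (2 * n + 2) <= E.
Proof.
  intros Tmax fT.
  assert (D2 : forall x, derivable_pt_lim (fun s => 2 * (f s * f' s)) x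
                 (2 * (f' x * f' x + f x * f'' x))).
  { intros x; apply (derivable_pt_lim_scal (mult_fct f f')), derivable_pt_lim_mult; auto. }
  pose proof (second_deriv_le0_at_max _ _ _ T deriv_sqr D2 Tmax) as concave.
  pose proof (deriv_zero_at_max T Tmax fT) as f'T; simpl in concave; rewrite f'T, f''_eq in concave.
  destruct (Rle_or_lt (T ^ (2 * n + 2)) E) as [| outside]; [assumption | exfalso].
  assert (T <> 0) by (intros ->; rewrite pow_i in outside by lia; lra).
  assert (0 < T ^ (2 * n)) by (rewrite pow_mult; apply pow_lt; nra).
  assert (0 < f T * f T) by nra.
  assert (0 < T ^ (2 * n) * (T ^ (2 * n + 2) - E)) by (apply Rmult_lt_0_compat; lra).
  nra.
Qed.

Lemma weighted_density_continuous (x : R) : continuous (fun s => (s ^ n * f s) ^ 2) x.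
Proof.
  apply (ex_derive_continuous (K := R_AbsRing) (V := R_NormedModule)).
  auto_derive; repeat split; auto.
  exists (f' x); apply is_derive_Reals, Df.
Qed.

Lemma plateau_estimate (T rho delta : R) :
  (forall s, f s ^ 2 <= f T ^ 2) -> f T <> 0 -> 0 <= T <= rho ->
  rho ^ (2 * n + 2) <= E -> 0 < delta <= rho ->
  4 ^ (2 * n + 1) * rho ^ (2 * n) * E * delta ^ 2 <= / 2 ->
  delta * (T + delta / 2) ^ (2 * n) * f T ^ 2 <= 8.
Proof.
  intros Tmax fT T_in rho_E delta_in small.
  set (Q := 4 ^ (2 * n + 1) * rho ^ (2 * n) * E) in small.
  set (M := Rabs (f T)).
  assert (abs_le : forall s, Rabs (f s) <= M).
  { intros s; apply Rsqr_le_abs_0; unfold Rsqr; specialize (Tmax s); simpl in Tmax; lra. }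
  assert (f''_le : forall r, T <= r <= T + delta -> Rabs (f'' r) <= Q * M).
  { intros r r_in; rewrite f''_eq, Rabs_mult.
    apply Rmult_le_compat; auto using Rabs_pos.
    apply potential_bound; auto; lra. }
  assert (near_max : forall r, T <= r <= T + delta -> M / 2 <= Rabs (f r)).
  { intros r r_in.
    pose proof (taylor2_bound f f' f'' T r (Q * M) Df Df'
                  (deriv_zero_at_max T Tmax fT) ltac:(lra)
                  (fun x x_in => f''_le x ltac:(lra))) as taylor.
    assert (0 <= Q * M) by (eapply Rle_trans; [apply Rabs_pos | apply (f''_le T); lra]).
    assert (Q * M * (r - T) ^ 2 <= Q * M * delta ^ 2)
      by (apply Rmult_le_compat_l; [assumption | apply pow_incr; lra]).
    pose proof (Rabs_triang_inv (f T) (f T - f r)).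
    replace (f T - (f T - f r)) with (f r) in * by ring.
    rewrite <- Rabs_Ropp, Ropp_minus_distr in taylor.
    assert (0 <= M) by apply Rabs_pos.
    unfold M in *; nra. }
  assert (lower : (T + delta - (T + delta / 2)) * ((T + delta / 2) ^ (2 * n) * (M / 2) ^ 2)
                  <= RInt (fun s => (s ^ n * f s) ^ 2) (T + delta / 2) (T + delta)).
  { apply RInt_ge_const; [lra | apply weighted_density_continuous |].
    intros x x_in.
    rewrite Rpow_mult_distr, <- pow_mult, <- (pow2_abs (f x)).
    replace (n * 2)%nat with (2 * n)%nat by lia.
    apply Rmult_le_compat; [apply pow_even_ge0 | pose proof (Rabs_pos (f T)); unfold M; nra
                           | apply pow_incr; lra |].
    apply pow_incr; split; [pose proof (Rabs_pos (f T)); unfold M; lra |].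
    apply near_max; lra. }
  pose proof (mass_le1 (T + delta / 2) (T + delta) ltac:(lra)).
  unfold M in lower; rewrite <- (pow2_abs (f T)).
  lra.
Qed.

Lemma weighted_mass_near_origin (T eta : R) :
  (forall s, f s ^ 2 <= f T ^ 2) -> f T <> 0 -> 0 <= T <= eta -> 0 < eta ->
  4 ^ (2 * n + 2) * E * eta ^ (2 * n + 2) <= 1 ->
  eta ^ (2 * n + 1) * f T ^ 2 <= 8 * 4 ^ n.
Proof.
  intros Tmax fT T_in eta_pos eta_small.
  rewrite pow4_2n2 in eta_small.
  assert (A1 : 1 <= 4 ^ n) by (apply pow_R1_Rle; lra).
  assert (eta_well : eta ^ (2 * n + 2) <= E).
  { assert (0 <= (16 * (4 ^ n) ^ 2 * E - 1) * eta ^ (2 * n + 2))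
      by (apply Rmult_le_pos; [nra | apply pow_le; lra]).
    lra. }
  assert (small : 4 ^ (2 * n + 1) * eta ^ (2 * n) * E * eta ^ 2 <= / 2).
  { rewrite pow4_2n1; rewrite pow_2n2 in eta_small; lra. }
  pose proof (plateau_estimate T eta eta Tmax fT ltac:(lra) eta_well ltac:(lra) small).
  assert (eta ^ (2 * n) <= 4 ^ n * (T + eta / 2) ^ (2 * n)).
  { replace eta with (2 * (eta / 2)) at 1 by field.
    rewrite pow_double_even; apply Rmult_le_compat_l; [lra | apply pow_incr; lra]. }
  rewrite pow_2n1.
  replace (eta ^ (2 * n) * eta * f T ^ 2) with (eta ^ (2 * n) * (eta * f T ^ 2)) by ring.
  apply Rle_trans with (4 ^ n * (T + eta / 2) ^ (2 * n) * (eta * f T ^ 2)).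
  - apply Rmult_le_compat_r; [pose proof (pow2_ge_0 (f T)); nra | assumption].
  - replace (4 ^ n * (T + eta / 2) ^ (2 * n) * (eta * f T ^ 2))
      with (4 ^ n * (eta * (T + eta / 2) ^ (2 * n) * f T ^ 2)) by ring.
    rewrite (Rmult_comm 8); apply Rmult_le_compat_l; lra.
Qed.

Lemma weighted_mass_away (T : R) :
  (forall s, f s ^ 2 <= f T ^ 2) -> f T <> 0 -> 0 < T ->
  T ^ (2 * n + 1) * f T ^ 2 <= 32 * 4 ^ n * E.
Proof.
  intros Tmax fT T_pos.
  pose proof (max_point_in_well T Tmax fT) as T_well.
  assert (A1 : 1 <= 4 ^ n) by (apply pow_R1_Rle; lra).
  assert (AE : 1 <= 4 * 4 ^ n * E) by nra.
  set (delta := T / (4 * 4 ^ n * E)).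
  assert (delta_in : 0 < delta <= T).
  { unfold delta; split; [apply Rdiv_lt_0_compat; lra |].
    apply Rmult_le_reg_r with (4 * 4 ^ n * E); [lra |].
    unfold Rdiv; rewrite Rmult_assoc, Rinv_l, Rmult_1_r by lra; nra. }
  assert (small : 4 ^ (2 * n + 1) * T ^ (2 * n) * E * delta ^ 2 <= / 2).
  { replace (4 ^ (2 * n + 1) * T ^ (2 * n) * E * delta ^ 2) with (T ^ (2 * n + 2) / (4 * E))
      by (unfold delta; rewrite pow4_2n1, pow_2n2; field; nra).
    apply Rmult_le_reg_r with (4 * E); [lra |].
    unfold Rdiv; rewrite Rmult_assoc, Rinv_l, Rmult_1_r by lra; lra. }
  pose proof (plateau_estimate T T delta Tmax fT ltac:(lra) T_well delta_in small).
  replace (T ^ (2 * n + 1) * f T ^ 2) with (4 * 4 ^ n * E * (delta * T ^ (2 * n) * f T ^ 2))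
    by (unfold delta; rewrite pow_2n1; field; nra).
  replace (32 * 4 ^ n * E) with (4 * 4 ^ n * E * 8) by ring.
  apply Rmult_le_compat_l; [nra |].
  eapply Rle_trans; [| eassumption].
  apply Rmult_le_compat_r; [apply pow2_ge_0 |].
  apply Rmult_le_compat_l; [lra | apply pow_incr; lra].
Qed.

Lemma max_sqr_bound (T : R) :
  (forall s, f s ^ 2 <= f T ^ 2) -> 0 <= T -> f T ^ 2 <= 4 ^ (3 * n + 5) * E ^ 2.
Proof.
  intros Tmax T_ge0.
  assert (A1 : 1 <= 4 ^ n) by (apply pow_R1_Rle; lra).
  assert (0 <= (4 ^ n) ^ 3 * E ^ 2) by (apply Rmult_le_pos; apply pow_le; lra).
  rewrite pow4_3n5.
  destruct (Req_dec (f T) 0) as [fT0 | fT]; [rewrite fT0, pow_i by lia; lra |].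
  set (c := 4 ^ (2 * n + 2) * E).
  assert (c_eq : c = 16 * (4 ^ n) ^ 2 * E) by (unfold c; rewrite pow4_2n2; ring).
  assert (c_ge1 : 1 <= c) by nra.
  assert (trade : forall x b, 1 <= x * c -> x * f T ^ 2 <= b -> f T ^ 2 <= b * c).
  { intros x b x_low x_mass; pose proof (pow2_ge_0 (f T)).
    apply Rle_trans with (f T ^ 2 * (x * c)); [nra |].
    replace (f T ^ 2 * (x * c)) with (x * f T ^ 2 * c) by ring.
    apply Rmult_le_compat_r; lra. }
  destruct (exists_pow_eq_inv c (2 * n + 2) c_ge1 ltac:(lia)) as [eta [eta_in eta_pow]].
  assert (eta_low : 1 <= eta ^ (2 * n + 1) * c).
  { assert (decr : eta ^ (2 * n + 2) <= eta ^ (2 * n + 1)).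
    { replace (2 * n + 2)%nat with (S (2 * n + 1)) by lia; rewrite <- tech_pow_Rmult.
      pose proof (pow_le eta (2 * n + 1) ltac:(lra)); nra. }
    rewrite eta_pow in decr.
    apply Rmult_le_reg_r with (/ c); [apply Rinv_0_lt_compat; lra |].
    rewrite Rmult_assoc, Rinv_r, Rmult_1_r, Rmult_1_l by lra; assumption. }
  destruct (Rlt_or_le T eta) as [T_small | T_large].
  - assert (eta_small : 4 ^ (2 * n + 2) * E * eta ^ (2 * n + 2) <= 1).
    { fold c; rewrite eta_pow, Rinv_r by lra; lra. }
    pose proof (trade _ _ eta_low
                  (weighted_mass_near_origin T eta Tmax fT ltac:(lra) ltac:(lra) eta_small)).
    rewrite c_eq in *; nra.
  - assert (T_low : 1 <= T ^ (2 * n + 1) * c).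
    { eapply Rle_trans; [exact eta_low |].
      apply Rmult_le_compat_r; [lra | apply pow_incr; lra]. }
    pose proof (trade _ _ T_low (weighted_mass_away T Tmax fT ltac:(lra))).
    rewrite c_eq in *; nra.
Qed.

End SupBound.

Lemma eigenfunction_sup_bound (n : nat) (E A : R) (f : R -> R) :
  1 <= E -> weighted_eigenfunction n E f -> L2_normalized (fun t => t ^ n * f t) ->
  (forall s, f (- s) ^ 2 = f s ^ 2) -> (forall s, 1 <= Rabs s -> Rabs (s * f s) <= A) ->
  forall t, Rabs (f t) <= 2 ^ (3 * n + 5) * E.
Proof.
  intros E_ge1 [f' [f'' [Df [Df' eigen]]]] L2 f_even decay t.
  assert (bound_ge0 : 0 <= 2 ^ (3 * n + 5) * E) by (apply Rmult_le_pos; [apply pow_le |]; lra).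
  destruct (Req_dec (f t) 0) as [ft0 | ft]; [rewrite ft0, Rabs_R0; assumption |].
  assert (mass_le1 : forall u v, u <= v -> RInt (fun s => (s ^ n * f s) ^ 2) u v <= 1).
  { intros u v uv; apply RInt_le_is_RInt_gen; auto using pow2_ge_0.
    apply (weighted_density_continuous n f f' Df). }
  destruct (sqr_attains_max f A t) as [T0 T0max]; auto.
  { intros x; apply (derivable_continuous_pt f x (exist _ (f' x) (Df x))). }
  assert (Tmax : forall s, f s ^ 2 <= f (Rabs T0) ^ 2).
  { intros s; destruct (Rle_or_lt 0 T0).
    - rewrite Rabs_right by lra; apply T0max.
    - rewrite Rabs_left, f_even by lra; apply T0max. }
  pose proof (max_sqr_bound n E f f' f'' E_ge1 Df Df' eigen mass_le1 (Rabs T0) Tmax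
                (Rabs_pos T0)) as bound.
  rewrite <- (Rabs_right (2 ^ (3 * n + 5) * E)) by lra.
  apply Rsqr_le_abs_0; unfold Rsqr.
  replace (2 ^ (3 * n + 5) * E * (2 ^ (3 * n + 5) * E)) with (4 ^ (3 * n + 5) * E ^ 2)
    by (replace 4 with (2 * 2) by ring; rewrite Rpow_mult_distr; ring).
  specialize (Tmax t); simpl in *; lra.
Qed.

(** * Laguerre polynomials and their Gaussian profiles *)

Definition laguerre_coef (k : nat) (a : R) (i : nat) : R :=
  (-1) ^ i * gbinom (INR k + a) (k - i) / INR (Factorial.fact i).

(* Termwise derivatives; the spurious powers [x ^ pred 0] and [x ^ pred (pred 1)] carry the
   coefficient [INR 0]. *)
Definition laguerre_d1 (k : nat) (a x : R) : R :=
  sum_f_R0 (fun i => laguerre_coef k a i * INR i * x ^ pred i) k.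

Definition laguerre_d2 (k : nat) (a x : R) : R :=
  sum_f_R0 (fun i => laguerre_coef k a i * INR i * INR (pred i) * x ^ pred (pred i)) k.

Lemma laguerre_sum (k : nat) (a x : R) :
  laguerre k a x = sum_f_R0 (fun i => laguerre_coef k a i * x ^ i) k.
Proof. apply sum_eq; intros i _; unfold laguerre_coef, Rdiv; ring. Qed.

Lemma is_derive_sum_pow (c : nat -> R) (e : nat -> nat) (m : nat) (x : R) :
  is_derive (fun y => sum_f_R0 (fun i => c i * y ^ e i) m) x
    (sum_f_R0 (fun i => c i * INR (e i) * x ^ pred (e i)) m).
Proof.
  induction m as [| m IH]; simpl.
  - auto_derive; [trivial | ring].
  - apply (is_derive_plus (K := R_AbsRing) (V := R_NormedModule)); [exact IH |].
    auto_derive; [trivial | ring].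
Qed.

Lemma is_derive_laguerre (k : nat) (a x : R) : is_derive (laguerre k a) x (laguerre_d1 k a x).
Proof.
  apply (is_derive_ext (fun y => sum_f_R0 (fun i => laguerre_coef k a i * y ^ i) k)).
  - intros y; symmetry; apply laguerre_sum.
  - apply (is_derive_sum_pow _ (fun i => i)).
Qed.

Lemma is_derive_laguerre_d1 (k : nat) (a x : R) :
  is_derive (laguerre_d1 k a) x (laguerre_d2 k a x).
Proof. apply (is_derive_sum_pow (fun i => laguerre_coef k a i * INR i) pred). Qed.

Lemma laguerre_coef_succ (k : nat) (a : R) (j : nat) : (j < k)%nat ->
  laguerre_coef k a (S j) * INR (S j) * (INR j + 1 + a) = - (INR k - INR j) * laguerre_coef k a j.
Proof.
  intros jk; unfold laguerre_coef.
  replace (k - j)%nat with (S (k - S j)) by lia.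
  change (gbinom (INR k + a) (S (k - S j)))
    with (gbinom (INR k + a) (k - S j) * (INR k + a - INR (k - S j)) / INR (S (k - S j))).
  rewrite (S_INR (k - S j)), minus_INR, S_INR by lia.
  change (Factorial.fact (S j)) with (S j * Factorial.fact j)%nat.
  rewrite mult_INR, S_INR.
  pose proof (INR_fact_neq_0 j); pose proof (pos_INR j).
  assert (INR j < INR k) by (apply lt_INR; assumption).
  simpl pow; field; lra.
Qed.

Lemma sum_telescope (t u : nat -> R) (m : nat) :
  t 0%nat = u 0%nat -> (forall j, (j < m)%nat -> t (S j) = u (S j) - u j) ->
  sum_f_R0 t m = u m.
Proof.
  intros t0 tS; induction m as [| m IH]; simpl; [assumption |].
  rewrite IH, tS by (lia || (intros; apply tS; lia)); ring.
Qed.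

Lemma sum_lin_comb (p q r : R) (A B C : nat -> R) (m : nat) :
  p * sum_f_R0 A m + q * sum_f_R0 B m + r * sum_f_R0 C m =
  sum_f_R0 (fun i => p * A i + q * B i + r * C i) m.
Proof. induction m as [| m IH]; simpl; [| rewrite <- IH]; ring. Qed.

(* By [laguerre_coef_succ] the sum telescopes to [(k - k) * c_k * x ^ k]. *)
Lemma laguerre_ode (k : nat) (a x : R) :
  x * laguerre_d2 k a x + (a + 1 - x) * laguerre_d1 k a x + INR k * laguerre k a x = 0.
Proof.
  rewrite laguerre_sum; unfold laguerre_d1, laguerre_d2; rewrite sum_lin_comb.
  rewrite (sum_telescope _ (fun i => (INR k - INR i) * laguerre_coef k a i * x ^ i)).
  - ring.
  - simpl; ring.
  - intros j jk.
    pose proof (laguerre_coef_succ k a j jk) as rec.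
    assert (shift : x * (INR j * x ^ pred j) = INR j * x ^ j)
      by (destruct j; simpl; ring).
    simpl pred; rewrite !S_INR in *.
    replace (x ^ S j) with (x * x ^ j) by reflexivity.
    replace (INR k - (INR j + 1)) with (INR k - INR j - 1) by ring.
    transitivity (laguerre_coef k a (S j) * (INR j + 1) * (INR j + 1 + a) * x ^ j
                  + (INR k - INR j - 1) * laguerre_coef k a (S j) * (x * x ^ j)).
    + replace (x * (laguerre_coef k a (S j) * (INR j + 1) * INR j * x ^ pred j))
        with (laguerre_coef k a (S j) * (INR j + 1) * (x * (INR j * x ^ pred j))) by ring.
      rewrite shift; ring.
    + rewrite rec; ring.
Qed.

Definition gaussian (n : nat) (t : R) : R := exp (- t ^ (2 * n + 2) / INR (2 * n + 2)).
Definition laguerre_arg (n : nat) (t : R) : R := t ^ (2 * n + 2) / INR (n + 1).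

Lemma is_derive_gaussian (n : nat) (t : R) :
  is_derive (gaussian n) t (- t ^ (2 * n + 1) * gaussian n t).
Proof.
  unfold gaussian; auto_derive; [trivial |].
  replace (n + (n + 0) + 2)%nat with (2 * n + 2)%nat by lia.
  replace (pred (2 * n + 2)) with (2 * n + 1)%nat by lia.
  pose proof (pos_INR n); rewrite INR_2n2; unfold Rdiv; field; lra.
Qed.

Lemma is_derive_laguerre_arg (n : nat) (t : R) :
  is_derive (laguerre_arg n) t (2 * t ^ (2 * n + 1)).
Proof.
  unfold laguerre_arg; auto_derive; [trivial |].
  replace (n + (n + 0) + 2)%nat with (2 * n + 2)%nat by lia.
  replace (pred (2 * n + 2)) with (2 * n + 1)%nat by lia.
  pose proof (pos_INR n); rewrite INR_2n2, plus_INR; simpl; field; lra.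
Qed.

Section LaguerreTransform.

Variables (n : nat) (a kappa : R) (y y' y'' : R -> R).
Hypothesis Dy : forall x, is_derive y x (y' x).
Hypothesis Dy' : forall x, is_derive y' x (y'' x).
Hypothesis laguerre_eq : forall x, x * y'' x + (a + 1 - x) * y' x + kappa * y x = 0.

(* [auto_derive] spells [2 * n] as [n + (n + 0)]. *)
Ltac derive_profile :=
  auto_derive;
  [ repeat split; eexists; eauto using is_derive_gaussian, is_derive_laguerre_arg
  | rewrite ?(is_derive_unique _ _ _ (is_derive_gaussian _ _)),
            ?(is_derive_unique _ _ _ (is_derive_laguerre_arg _ _)),
            ?(is_derive_unique _ _ _ (Dy _)), ?(is_derive_unique _ _ _ (Dy' _));
    try replace (n + (n + 0) + 1)%nat with (2 * n + 1)%nat by lia;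
    try replace (n + (n + 0) + 2)%nat with (2 * n + 2)%nat by lia;
    try replace (pred (2 * n + 1)) with (2 * n)%nat by lia;
    try replace (pred (2 * n + 2)) with (2 * n + 1)%nat by lia ].

Lemma even_profile_eigen :
  a = - / INR (2 * n + 2) ->
  weighted_eigenfunction n (4 * kappa * (INR n + 1) + 2 * INR n + 1)
    (fun t => gaussian n t * y (laguerre_arg n t)).
Proof.
  intros ->.
  apply (weighted_eigenfunction_intro n _ _
           (fun t => gaussian n t * (t ^ (2 * n + 1)
                                     * (2 * y' (laguerre_arg n t) - y (laguerre_arg n t))))).
  - intros t; derive_profile; ring.
  - intros t; derive_profile.
    apply Rminus_diag_uniq.
    rewrite <- (Rmult_0_r (4 * (INR n + 1) * t ^ (2 * n) * gaussian n t)),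
            <- (laguerre_eq (laguerre_arg n t)).
    unfold laguerre_arg; rewrite !pow_2n1, !pow_2n2, ?INR_2n2, ?plus_INR, ?mult_INR.
    pose proof (pos_INR n); simpl; field; lra.
Qed.

Lemma odd_profile_eigen :
  a = / INR (2 * n + 2) ->
  weighted_eigenfunction n (4 * kappa * (INR n + 1) + 2 * INR n + 3)
    (fun t => gaussian n t * t * y (laguerre_arg n t)).
Proof.
  intros ->.
  apply (weighted_eigenfunction_intro n _ _
           (fun t => gaussian n t * ((1 - t ^ (2 * n + 2)) * y (laguerre_arg n t)
                                     + 2 * t ^ (2 * n + 2) * y' (laguerre_arg n t)))).
  - intros t; derive_profile; rewrite !pow_2n1, !pow_2n2; ring.
  - intros t; derive_profile.
    apply Rminus_diag_uniq.
    rewrite <- (Rmult_0_r (4 * (INR n + 1) * t ^ (2 * n) * t * gaussian n t)),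
            <- (laguerre_eq (laguerre_arg n t)).
    unfold laguerre_arg; rewrite !pow_2n1, !pow_2n2, ?INR_2n2, ?plus_INR, ?mult_INR.
    pose proof (pos_INR n); simpl; field; lra.
Qed.

End LaguerreTransform.

Lemma gaussian_eq (n : nat) (t : R) : gaussian n t = exp (- laguerre_arg n t / 2).
Proof.
  unfold gaussian, laguerre_arg; rewrite INR_2n2, plus_INR.
  pose proof (pos_INR n); f_equal; simpl; field; lra.
Qed.

Lemma laguerre_abs_le (k : nat) (a x : R) :
  0 <= x -> Rabs (laguerre k a x) <= sum_f_R0 (fun i => Rabs (laguerre_coef k a i) * x ^ i) k.
Proof.
  intros x_ge0; rewrite laguerre_sum.
  eapply Rle_trans; [apply Rabs_triang_gen |].
  apply sum_Rle; intros i _.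
  rewrite Rabs_mult, <- RPow_abs, (Rabs_right x) by lra; lra.
Qed.

Lemma laguerre_profile_decay (n k : nat) (a : R) (j : nat) : (j <= 1)%nat ->
  exists A, forall t, 1 <= Rabs t ->
    Rabs (t * (gaussian n t * t ^ j * laguerre k a (laguerre_arg n t))) <= A.
Proof.
  intros j_le1.
  exists ((INR n + 1) ^ 2 * sum_f_R0 (fun i => Rabs (laguerre_coef k a i)
                                            * (2 ^ (i + 2) * INR (Factorial.fact (i + 2)))) k).
  intros t t_ge1.
  assert (n1 : 0 < INR n + 1) by (pose proof (pos_INR n); lra).
  assert (arg_eq : (INR n + 1) * laguerre_arg n t = Rabs t ^ (2 * n + 2)).
  { unfold laguerre_arg; rewrite plus_INR.
    replace (2 * n + 2)%nat with (2 * (n + 1))%nat by lia.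
    rewrite pow_even_abs; simpl INR; field; lra. }
  set (x := laguerre_arg n t) in *.
  assert (x_ge0 : 0 <= x).
  { apply Rmult_le_reg_l with (INR n + 1); [lra |].
    rewrite arg_eq, Rmult_0_r; apply pow_le, Rabs_pos. }
  assert (t_pow : Rabs t ^ (S j) <= ((INR n + 1) * x) ^ 2).
  { rewrite arg_eq, <- pow_mult; apply Rle_pow; [assumption | lia]. }
  rewrite !Rabs_mult, <- RPow_abs, gaussian_eq, (Rabs_right (exp _)) by (left; apply exp_pos).
  fold x.
  pose proof (exp_pos (- x / 2)); pose proof (laguerre_abs_le k a x x_ge0).
  apply Rle_trans with (exp (- x / 2) * ((INR n + 1) * x) ^ 2
                        * sum_f_R0 (fun i => Rabs (laguerre_coef k a i) * x ^ i) k).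
  - replace (Rabs t * (exp (- x / 2) * Rabs t ^ j * Rabs (laguerre k a x)))
      with (exp (- x / 2) * Rabs t ^ S j * Rabs (laguerre k a x)) by (simpl; ring).
    apply Rmult_le_compat; auto using Rabs_pos.
    + apply Rmult_le_pos; [lra | apply pow_le, Rabs_pos].
    + apply Rmult_le_compat_l; lra.
  - rewrite scal_sum, scal_sum.
    apply sum_Rle; intros i _.
    replace (Rabs (laguerre_coef k a i) * x ^ i * (exp (- x / 2) * ((INR n + 1) * x) ^ 2))
      with (Rabs (laguerre_coef k a i) * (exp (- x / 2) * x ^ (i + 2)) * (INR n + 1) ^ 2)
      by (rewrite pow_add; ring).
    apply Rmult_le_compat_r; [nra |].
    apply Rmult_le_compat_l; [apply Rabs_pos | apply exp_half_mul_pow_le; assumption].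
Qed.

(** * The functions v_k and w_k *)

Lemma v_unnorm_even (n k : nat) (s : R) : v_unnorm n k (- s) = v_unnorm n k s.
Proof. unfold v_unnorm; rewrite pow_2n2_opp; reflexivity. Qed.

Lemma w_unnorm_odd (n k : nat) (s : R) : w_unnorm n k (- s) = - w_unnorm n k s.
Proof. unfold w_unnorm; rewrite pow_2n2_opp; ring. Qed.

Lemma Ek_eq (n k : nat) : Ek n k = 4 * INR k * (INR n + 1) + 2 * INR n + 1.
Proof. unfold Ek; rewrite !plus_INR, !mult_INR, plus_INR; simpl; ring. Qed.

Lemma Ek_ge1 (n k : nat) : 1 <= Ek n k.
Proof. rewrite Ek_eq; pose proof (pos_INR k); pose proof (pos_INR n); nra. Qed.

Lemma v_unnorm_eigen (n k : nat) : weighted_eigenfunction n (Ek n k) (v_unnorm n k).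
Proof.
  rewrite Ek_eq.
  apply (even_profile_eigen n _ (INR k) _ _ _ (is_derive_laguerre k _)
           (is_derive_laguerre_d1 k _) (laguerre_ode k _)).
  reflexivity.
Qed.

Lemma w_unnorm_eigen (n k : nat) : weighted_eigenfunction n (Ek n k + 2) (w_unnorm n k).
Proof.
  replace (Ek n k + 2) with (4 * INR k * (INR n + 1) + 2 * INR n + 3) by (rewrite Ek_eq; ring).
  apply (odd_profile_eigen n _ (INR k) _ _ _ (is_derive_laguerre k _)
           (is_derive_laguerre_d1 k _) (laguerre_ode k _)).
  reflexivity.
Qed.

Lemma v_sup_bound (n k : nat) (c : R) :
  L2_normalized (fun t => t ^ n * (c * v_unnorm n k t)) ->
  forall t, Rabs (c * v_unnorm n k t) <= 2 ^ (3 * n + 5) * Ek n k.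
Proof.
  intros L2.
  destruct (laguerre_profile_decay n k (- / INR (2 * n + 2)) 0 ltac:(lia)) as [A decay].
  apply (eigenfunction_sup_bound n (Ek n k) (Rabs c * A)); auto using Ek_ge1.
  - apply weighted_eigenfunction_scale, v_unnorm_eigen.
  - intros s; rewrite v_unnorm_even; reflexivity.
  - intros s s_ge1.
    replace (s * (c * v_unnorm n k s))
      with (c * (s * (gaussian n s * s ^ 0 * laguerre k (- / INR (2 * n + 2)) (laguerre_arg n s))))
      by (unfold v_unnorm, gaussian, laguerre_arg; simpl; ring).
    rewrite Rabs_mult; apply Rmult_le_compat_l; auto using Rabs_pos.
Qed.

Lemma w_sup_bound (n k : nat) (d : R) :
  L2_normalized (fun t => t ^ n * (d * w_unnorm n k t)) ->
  forall t, Rabs (d * w_unnorm n k t) <= 2 ^ (3 * n + 5) * (Ek n k + 2).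
Proof.
  intros L2.
  destruct (laguerre_profile_decay n k (/ INR (2 * n + 2)) 1 ltac:(lia)) as [A decay].
  apply (eigenfunction_sup_bound n (Ek n k + 2) (Rabs d * A));
    [pose proof (Ek_ge1 n k); lra | | assumption | |].
  - apply weighted_eigenfunction_scale, w_unnorm_eigen.
  - intros s; rewrite w_unnorm_odd; ring.
  - intros s s_ge1.
    replace (s * (d * w_unnorm n k s))
      with (d * (s * (gaussian n s * s ^ 1 * laguerre k (/ INR (2 * n + 2)) (laguerre_arg n s))))
      by (unfold w_unnorm, gaussian, laguerre_arg; simpl; ring).
    rewrite Rabs_mult; apply Rmult_le_compat_l; auto using Rabs_pos.
Qed.

Lemma Ek_le_Rpower (n k : nat) : Ek n k <= Rpower (Ek n k) (3 / 2 + / INR (4 * n + 4)).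
Proof.
  pose proof (Ek_ge1 n k).
  rewrite <- (Rpower_1 (Ek n k)) at 1 by lra.
  apply Rle_Rpower; [assumption |].
  assert (0 < / INR (4 * n + 4)) by (apply Rinv_0_lt_compat, lt_0_INR; lia).
  lra.
Qed.

Theorem proposition5p2 (n : nat) (c d : nat -> R) :
  (forall k, 0 < c k) -> (forall k, 0 < d k) ->
  (forall k, L2_normalized (fun t => t ^ n * (c k * v_unnorm n k t))) ->
  (forall k, L2_normalized (fun t => t ^ n * (d k * w_unnorm n k t))) ->
  exists C0 : R, 0 < C0 /\
    forall k : nat, forall t : R,
      Rabs (c k * v_unnorm n k t) <= C0 * Rpower (Ek n k) (3 / 2 + / INR (4 * n + 4)) /\
      Rabs (d k * w_unnorm n k t) <= C0 * Rpower (Ek n k) (3 / 2 + / INR (4 * n + 4)).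
Proof.
  intros _ _ Hv Hw.
  assert (K_pos : 0 < 2 ^ (3 * n + 5)) by (apply pow_lt; lra).
  exists (3 * 2 ^ (3 * n + 5)); split; [lra |].
  intros k t.
  pose proof (Ek_ge1 n k); pose proof (Ek_le_Rpower n k).
  pose proof (v_sup_bound n k (c k) (Hv k) t); pose proof (w_sup_bound n k (d k) (Hw k) t).
  split; nra.
Qed.
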